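(* The axiom system $E_{FTP}$ is head normalizing for $T(\Sigma_{FTP})$: for every $t\in T(\Sigma_{FTP})$ there exists $t'\in T(\Sigma_{FTP})$ in head normal form such that $E_{FTP}\vdash t=t'$.
   Context: Fix a finite nonempty set $\mathcal A$ of actions, a finite set $\mathcal P$ of predicates, a subset $\mathcal P^I\subseteq\mathcal P$ of ''implicit'' predicates, and for each $P\in\mathcal P^I$ a set $\mathcal A_P\subseteq\mathcal A$. The signature $\Sigma_{FTP}$ consists of a constant $\delta$, a constant $\kappa_P$ for each $P\in\mathcal P$, a unary prefix $a.\_$ for each $a\in\mathcal A$, and binary $+$. Its operational semantics (transitions $\xrightarrow{a}$ and predicates $P\,t$ on closed terms) is the least one closed under the rules: $a.x\xrightarrow{a}x$; if $x\xrightarrow{a}x'$ then $x+y\xrightarrow{a}x'$; if $y\xrightarrow{a}y'$ then $x+y\xrightarrow{a}y'$; $P\kappa_P$; if $Px$ then $P(x+y)$; if $Py$ then $P(x+y)$; if $Px$ then $P(a.x)$ for all $P\in\mathcal P^I$ and $a\in\mathcal A_P$. $E_{FTP}$ consists of the axioms $x+y=y+x$, $(x+y)+z=x+(y+z)$, $x+x=x$, $x+\delta=x$, and $a.(x+\kappa_P)=a.(x+\kappa_P)+\kappa_P$ for all $P\in\mathcal P^I$, $a\in\mathcal A_P$. $E\vdash s=t$ means $s=t$ is derivable in equational logic (reflexivity, symmetry, transitivity, substitution instances, congruence). For a signature $\Sigma\supseteq\Sigma_{FTP}$, a closed term $t$ is in head normal form if $t=\sum_{i\in I}a_i.t_i+\sum_{j\in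 J}\kappa_{P_j}$ (finite sums, empty sum being $\delta$) where $\{P_j\mid j\in J\}$ is exactly the set of predicates satisfied by $t$. *)

From mathcomp Require Import all_boot.
Set Implicit Arguments. Unset Strict Implicit. Unset Printing Implicit Defensive.

Section FTP.
Variables (Act Pr : finType).
(* implicit predicates P^I and, for each P, the set A_P *)
Variables (PI : {set Pr}) (AP : Pr -> {set Act}).

Inductive term : Type :=
| Var : nat -> term
| Delta : term
| Kappa : Pr -> term
| Pref : Act -> term -> term
| Plus : term -> term -> term.

Fixpoint closed_term (t : term) : Prop :=
  match t with
  | Var _ => False
  | Delta | Kappa _ => True
  | Pref _ x => closed_term x
  | Plus x y => closed_term x /\ closed_term y
  end.

Fixpoint subst (s : nat -> term) (t : term) : term :=
  match t with
  | Var n => s n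
  | Delta => Delta
  | Kappa P => Kappa P
  | Pref a x => Pref a (subst s x)
  | Plus x y => Plus (subst s x) (subst s y)
  end.

Inductive step : term -> Act -> term -> Prop :=
| step_pref a x : step (Pref a x) a x
| step_plusl x y a x' : step x a x' -> step (Plus x y) a x'
| step_plusr x y a y' : step y a y' -> step (Plus x y) a y'.

Inductive holds : Pr -> term -> Prop :=
| holds_kappa P : holds P (Kappa P)
| holds_plusl P x y : holds P x -> holds P (Plus x y)
| holds_plusr P x y : holds P y -> holds P (Plus x y)
| holds_pref P a x : P \in PI -> a \in AP P -> holds P x -> holds P (Pref a x).

Inductive E_FTP : term -> term -> Prop :=
| ax_comm : E_FTP (Plus (Var 0) (Var 1)) (Plus (Var 1) (Var 0))
| ax_assoc : E_FTP (Plus (Plus (Var 0) (Var 1)) (Var 2))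
                   (Plus (Var 0) (Plus (Var 1) (Var 2)))
| ax_idem : E_FTP (Plus (Var 0) (Var 0)) (Var 0)
| ax_delta : E_FTP (Plus (Var 0) Delta) (Var 0)
| ax_impl P a : P \in PI -> a \in AP P ->
    E_FTP (Pref a (Plus (Var 0) (Kappa P)))
          (Plus (Pref a (Plus (Var 0) (Kappa P))) (Kappa P)).

Inductive derivable : term -> term -> Prop :=
| der_ax s t : E_FTP s t -> derivable s t
| der_refl t : derivable t t
| der_sym s t : derivable s t -> derivable t s
| der_trans s t u : derivable s t -> derivable t u -> derivable s u
| der_subst (sg : nat -> term) s t : derivable s t -> derivable (subst sg s) (subst sg t)
| der_pref a s t : derivable s t -> derivable (Pref a s) (Pref a t)
| der_plus s1 s2 t1 t2 : derivable s1 t1 -> derivable s2 t2 ->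
    derivable (Plus s1 s2) (Plus t1 t2).

Fixpoint sum_list (l : seq term) : term :=
  match l with
  | [::] => Delta
  | [:: x] => x
  | x :: l' => Plus x (sum_list l')
  end.

Definition hnf (t : term) : Prop :=
  exists (pre : seq (Act * term)) (ks : seq Pr),
    t = sum_list ([seq Pref p.1 p.2 | p <- pre] ++ [seq Kappa P | P <- ks])
    /\ (forall P : Pr, holds P t <-> P \in ks).

End FTP.

From HB Require Import structures.
From mathcomp Require Import all_boot.
Set Implicit Arguments. Unset Strict Implicit. Unset Printing Implicit Defensive.

(* Modulo associativity, commutativity, idempotence and [Delta] as unit, a
   closed term is the sum of its top-level summands [a.u] and [kappa_Q], and two
   finite sums are provably equal as soon as each absorbs every summand of the
   other, where [s] absorbs [x] when [s = s + x].  A head normal form of [t] only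
   adds the summands [kappa_P] for the predicates [P] satisfied by [t], and
   these are absorbed by [t]: by induction on the derivation of [P t], the
   prefix case being exactly the implicit-predicate axiom. *)

Section HeadNormalization.
Variables (Act Pr : finType) (PI : {set Pr}) (AP : Pr -> {set Act}).
Local Notation term := (term Act Pr).
Local Notation D := (derivable PI AP).
Local Notation holds := (holds PI AP).
Local Notation sum := (@sum_list Act Pr).

Lemma term_eq_dec : comparable term.
Proof. move=> x y; change ({x = y} + {x <> y}); decide equality; exact: eq_comparable. Qed.

HB.instance Definition _ := hasDecEq.Build term (compareP term_eq_dec).

Definition subst_xyz (x y z : term) (n : nat) : term :=
  match n with 0 => x | 1 => y | _ => z end.

Lemma der_plusC x y : D (Plus x y) (Plus y x).
Proof.
change (D (subst (subst_xyz x y x) (Plus (Var _ _ 0) (Var _ _ 1)))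
          (subst (subst_xyz x y x) (Plus (Var _ _ 1) (Var _ _ 0)))).
by apply/der_subst/der_ax; constructor.
Qed.

Lemma der_plusA x y z : D (Plus (Plus x y) z) (Plus x (Plus y z)).
Proof.
change (D (subst (subst_xyz x y z) (Plus (Plus (Var _ _ 0) (Var _ _ 1)) (Var _ _ 2)))
          (subst (subst_xyz x y z) (Plus (Var _ _ 0) (Plus (Var _ _ 1) (Var _ _ 2))))).
by apply/der_subst/der_ax; constructor.
Qed.

Lemma der_plusxx x : D (Plus x x) x.
Proof.
change (D (subst (subst_xyz x x x) (Plus (Var _ _ 0) (Var _ _ 0))) (subst (subst_xyz x x x) (Var _ _ 0))).
by apply/der_subst/der_ax; constructor.
Qed.

Lemma der_plus_delta x : D (Plus x (Delta Act Pr)) x.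
Proof.
change (D (subst (subst_xyz x x x) (Plus (Var _ _ 0) (Delta Act Pr))) (subst (subst_xyz x x x) (Var _ _ 0))).
by apply/der_subst/der_ax; constructor.
Qed.

Lemma der_implicit P a x : P \in PI -> a \in AP P ->
  D (Pref a (Plus x (Kappa Act P))) (Plus (Pref a (Plus x (Kappa Act P))) (Kappa Act P)).
Proof.
move=> PI_P AP_a.
change (D (subst (subst_xyz x x x) (Pref a (Plus (Var _ _ 0) (Kappa Act P))))
          (subst (subst_xyz x x x) (Plus (Pref a (Plus (Var _ _ 0) (Kappa Act P))) (Kappa Act P)))).
by apply/der_subst/der_ax; constructor.
Qed.

Lemma der_plusl x x' y : D x x' -> D (Plus x y) (Plus x' y).
Proof. by move=> xx'; apply: der_plus => //; apply: der_refl. Qed.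

Lemma der_plusr x y y' : D y y' -> D (Plus x y) (Plus x y').
Proof. by apply: der_plus; apply: der_refl. Qed.

Lemma der_plusAC x y z : D (Plus (Plus x y) z) (Plus (Plus x z) y).
Proof.
apply: der_trans (der_plusA _ _ _) _; apply: der_trans (der_plusr _ (der_plusC _ _)) _.
exact/der_sym/der_plusA.
Qed.

Definition absorbs (s x : term) := D s (Plus s x).

Lemma absorbs_der s s' x : D s s' -> absorbs s x -> absorbs s' x.
Proof.
move=> ss' sx; apply: der_trans (der_sym ss') _; apply: der_trans sx _.
exact: der_plusl.
Qed.

Lemma holds_absorbs P u : holds P u -> absorbs u (Kappa Act P).
Proof.
elim=> {P u} [P | P x y _ IHx | P x y _ IHy | P a x PI_P AP_a _ IHx].
- exact/der_sym/der_plusxx.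
- by apply: der_trans (der_plusl _ IHx) _; apply: der_plusAC.
- by apply: der_trans (der_plusr _ IHy) _; apply/der_sym/der_plusA.
- apply: der_trans (der_pref a IHx) _; apply: der_trans (der_implicit _ PI_P AP_a) _.
  exact/der_plusl/der_pref/der_sym.
Qed.

Lemma der_sum_cons x l : D (sum (x :: l)) (Plus x (sum l)).
Proof. by case: l => [|y l]; [apply/der_sym/der_plus_delta | apply: der_refl]. Qed.

Lemma der_sum_cat l1 l2 : D (sum (l1 ++ l2)) (Plus (sum l1) (sum l2)).
Proof.
elim: l1 => [|x l1 IH] /=.
  exact/der_sym/(der_trans (der_plusC _ _))/der_plus_delta.
apply: der_trans (der_sum_cons _ _) _; apply: der_trans (der_plusr _ IH) _.
apply: der_trans (der_sym (der_plusA _ _ _)) _.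
exact/der_plusl/der_sym/der_sum_cons.
Qed.

Lemma absorbs_sum s l : {in l, forall x, absorbs s x} -> absorbs s (sum l).
Proof.
elim: l => [|x l IH] sl; first exact/der_sym/der_plus_delta.
have sx : absorbs s x by apply: sl; rewrite mem_head.
have {}IH : absorbs s (sum l) by apply: IH => y yl; apply: sl; rewrite inE yl orbT.
apply: der_trans IH _; apply: der_trans (der_plusl _ sx) _.
exact/(der_trans (der_plusA _ _ _))/der_plusr/der_sym/der_sum_cons.
Qed.

Lemma sum_absorbs_mem x l : x \in l -> absorbs (sum l) x.
Proof.
elim: l => [|y l IH] //; rewrite inE => /orP[/eqP<- | xl].
  apply: absorbs_der (der_sym (der_sum_cons _ _)) _; rewrite /absorbs.
  apply: der_trans (der_plusl _ (der_sym (der_plusxx x))) _.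
  exact: der_plusAC.
apply: absorbs_der (der_sym (der_sum_cons _ _)) _; rewrite /absorbs.
apply: der_trans (der_plusr _ (IH xl)) _; exact/der_sym/der_plusA.
Qed.

Lemma der_absorbs_anti s t : absorbs s t -> absorbs t s -> D s t.
Proof.
move=> st ts; apply: der_trans st _.
exact/(der_trans (der_plusC _ _))/der_sym.
Qed.

Lemma der_sum_absorbs l1 l2 :
  {in l2, forall x, absorbs (sum l1) x} -> {in l1, forall x, absorbs (sum l2) x} ->
  D (sum l1) (sum l2).
Proof. by move=> l1l2 l2l1; apply: der_absorbs_anti; apply: absorbs_sum. Qed.

Fixpoint summands (t : term) : seq term :=
  match t with
  | Plus x y => summands x ++ summands y
  | Delta => [::]
  | _ => [:: t]
  end.

Fixpoint prefs (t : term) : seq (Act * term) :=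
  match t with
  | Plus x y => prefs x ++ prefs y
  | Pref a u => [:: (a, u)]
  | _ => [::]
  end.

Lemma der_summands t : D t (sum (summands t)).
Proof.
elim: t => [n||P|a x _|x IHx y IHy] /=; try apply: der_refl.
exact/(der_trans (der_plus IHx IHy))/der_sym/der_sum_cat.
Qed.

Lemma summandsP t x : closed_term t -> x \in summands t ->
  (exists2 p, p \in prefs t & x = Pref p.1 p.2) \/ (exists2 Q, holds Q t & x = Kappa Act Q).
Proof.
elim: t => [n||P|a u _|y IHy z IHz] //=.
- by move=> _; rewrite inE => /eqP->; right; exists P => //; constructor.
- by move=> _; rewrite inE => /eqP->; left; exists (a, u); rewrite ?mem_head.
move=> [cy cz]; rewrite mem_cat => /orP[xy | xz].
- case: (IHy cy xy) => [[p py ->] | [Q Qy ->]].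
  + by left; exists p; rewrite // mem_cat py.
  + by right; exists Q => //; apply: holds_plusl.
- case: (IHz cz xz) => [[p pz ->] | [Q Qz ->]].
  + by left; exists p; rewrite // mem_cat pz orbT.
  + by right; exists Q => //; apply: holds_plusr.
Qed.

Lemma prefs_summands t p : p \in prefs t -> Pref p.1 p.2 \in summands t.
Proof.
elim: t => [n||P|a u _|y IHy z IHz] //=; first by rewrite inE => /eqP->; rewrite mem_head.
by rewrite !mem_cat => /orP[/IHy-> | /IHz->]; rewrite ?orbT.
Qed.

Lemma holds_summand P t x : x \in summands t -> holds P x -> holds P t.
Proof.
elim: t => [n||Q|a u _|y IHy z IHz] //=; try by rewrite inE => /eqP->.
rewrite mem_cat => /orP[xy | xz] Px; first exact/holds_plusl/IHy.
exact/holds_plusr/IHz.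
Qed.

Lemma closed_prefs t p : closed_term t -> p \in prefs t -> closed_term p.2.
Proof.
elim: t => [n||Q|a u _|y IHy z IHz] //=; first by move=> cu; rewrite inE => /eqP->.
by move=> [cy cz]; rewrite mem_cat => /orP[/(IHy cy) | /(IHz cz)].
Qed.

Lemma closed_sum l : {in l, forall x, closed_term x} -> closed_term (sum l).
Proof.
elim: l => [|x [|y l] IH] //= cl; first by apply: cl; rewrite mem_head.
split; first by apply: cl; rewrite mem_head.
by apply: IH => z zl; apply: cl; rewrite inE zl orbT.
Qed.

Lemma holds_plus P x y : holds P (Plus x y) <-> holds P x \/ holds P y.
Proof.
split; first by move=> Pxy; inversion Pxy; auto.
by case; [apply: holds_plusl | apply: holds_plusr].
Qed.

Lemma holds_sum P l : holds P (sum l) <-> exists2 x, x \in l & holds P x.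
Proof.
elim: l => [|x [|y l] IH].
- by split=> [Pd | [x]]; first inversion Pd.
- by split=> [Px | [y]]; [exists x; rewrite ?mem_head | rewrite inE => /eqP->].
- split=> [/holds_plus[Px | /IH[z zl Pz]] | [z]].
  + by exists x; rewrite ?mem_head.
  + by exists z; rewrite // inE zl orbT.
  + rewrite inE => /orP[/eqP-> Pz | zl Pz]; apply/holds_plus; first by left.
    by right; apply/IH; exists z.
Qed.

Fixpoint holdsb (P : Pr) (t : term) : bool :=
  match t with
  | Kappa Q => Q == P
  | Plus x y => holdsb P x || holdsb P y
  | Pref a x => [&& P \in PI, a \in AP P & holdsb P x]
  | _ => false
  end.

Lemma holdsP P t : reflect (holds P t) (holdsb P t).
Proof.
apply: (iffP idP).
  elim: t => [n||Q|a x IH|x IHx y IHy] //=.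
  - by move/eqP->; constructor.
  - by case/and3P=> PI_P AP_a /IH; apply: holds_pref.
  - by case/orP=> [/IHx/holds_plusl | /IHy/holds_plusr].
elim=> {P t} [P | P x y _ Px | P x y _ Py | P a x PI_P AP_a _ Px] /=.
all: by rewrite ?eqxx ?Px ?Py ?orbT ?PI_P ?AP_a.
Qed.

Definition holding_preds (t : term) : seq Pr := [seq P <- enum Pr | holdsb P t].

Lemma mem_holding_preds P t : (P \in holding_preds t) = holdsb P t.
Proof. by rewrite mem_filter mem_enum andbT. Qed.

Definition hnf_summands (t : term) : seq term :=
  [seq Pref p.1 p.2 | p <- prefs t] ++ [seq Kappa Act P | P <- holding_preds t].

Lemma hnf_summandsP t x : x \in hnf_summands t ->
  (exists2 p, p \in prefs t & x = Pref p.1 p.2) \/ (exists2 Q, holds Q t & x = Kappa Act Q).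
Proof.
rewrite mem_cat => /orP[/mapP[p pt ->] | /mapP[Q]]; first by left; exists p.
by rewrite mem_holding_preds => /holdsP Qt ->; right; exists Q.
Qed.

Lemma kappa_hnf_summands P t : holds P t -> Kappa Act P \in hnf_summands t.
Proof. by move/holdsP => Pt; rewrite mem_cat map_f ?orbT ?mem_holding_preds. Qed.

Lemma summands_hnf t : closed_term t -> {subset summands t <= hnf_summands t}.
Proof.
move=> ct x /(summandsP ct) [[p pt ->] | [Q Qt ->]]; last exact: kappa_hnf_summands.
by rewrite mem_cat map_f.
Qed.

Lemma closed_hnf_summands t : closed_term t -> closed_term (sum (hnf_summands t)).
Proof.
move=> ct; apply: closed_sum => x /hnf_summandsP[[p pt ->] | [Q _ ->]] //=.
exact: closed_prefs pt.
Qed.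

Lemma hnf_hnf_summands t : hnf PI AP (sum (hnf_summands t)).
Proof.
exists (prefs t), (holding_preds t); split=> // P.
rewrite mem_holding_preds; split=> [/holds_sum[x] | /holdsP Pt].
- case/hnf_summandsP=> [[p pt ->] Px | [Q Qt ->] PQ].
    exact/holdsP/(holds_summand (prefs_summands pt)).
  by inversion PQ; apply/holdsP.
- by apply/holds_sum; exists (Kappa Act P); [apply: kappa_hnf_summands | constructor].
Qed.

Lemma der_hnf_summands t : closed_term t -> D t (sum (hnf_summands t)).
Proof.
move=> ct; apply: der_trans (der_summands t) _; apply: der_sum_absorbs => x.
- case/hnf_summandsP=> [[p pt ->] | [Q Qt ->]].
    exact/sum_absorbs_mem/prefs_summands.
  exact/(absorbs_der (der_summands t))/holds_absorbs.
- by move/(summands_hnf ct); apply: sum_absorbs_mem.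
Qed.

End HeadNormalization.

Theorem lemma2 (Act Pr : finType) (hA : 0 < #|Act|)
    (PI : {set Pr}) (AP : Pr -> {set Act})
    (t : term Act Pr) :
  closed_term t ->
  exists t' : term Act Pr,
    closed_term t' /\ hnf PI AP t' /\ derivable PI AP t t'.
Proof.
move=> ct; exists (sum_list (hnf_summands PI AP t)); split; last split.
- exact: closed_hnf_summands.
- exact: hnf_hnf_summands.
- exact: der_hnf_summands.
Qed.
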